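(* Let $n\ge2$ and $T=\alpha_0I+\alpha_1D+\cdots+\alpha_nD^n\in\mathcal L(\mathcal P_n)$ with $\alpha_0\ne0$. For every $f\in\mathcal P_n$ of degree at least $2$ with simple roots, $$\lim_{t\to+\infty}d_F\Bigl(Z\bigl(S(\alpha_1/\alpha_0)H(t)f\bigr),\,Z\bigl(TH(t)f\bigr)\Bigr)=0.$$
   Context: $\mathcal P_n$ is the complex vector space of polynomials of degree at most $n$, $D$ differentiation, $I$ identity. For $\beta\in\mathbb C$, $(S(\beta)f)(z)=f(\beta+z)$; for $t>0$, $(H(t)f)(z)=f(z/t)$. $Z(f)$ denotes the roots of $f$ counted with multiplicity. For multisets $A=\{u_1,\dots,u_m\}$, $B=\{v_1,\dots,v_m\}$ in $\mathbb C$, $d_F(A,B)=\min_{\sigma}\max_k|u_k-v_{\sigma(k)}|$ over permutations $\sigma$ of $\{1,\dots,m\}$. *)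

From HB Require Import structures.
From mathcomp Require Import all_boot all_order all_fingroup all_algebra.
Set Implicit Arguments. Unset Strict Implicit. Unset Printing Implicit Defensive.
Import Order.TTheory GRing.Theory Num.Theory.
Local Open Scope ring_scope.

Section Defs.
Variable C : numClosedFieldType.

(* Z(f): the roots of f counted with multiplicity, as a sequence (order irrelevant):
   f = lead_coef f *: \prod_(z <- Zroots f) ('X - z%:P). *)
Definition Zroots (f : {poly C}) : seq C := sval (closed_field_poly_normal f).

Definition maxdev (A B : seq C) (s : 'S_(size A)) : C :=
  \big[Num.max/0]_(k < size A) `|A`_k - B`_(s k)|.
Arguments maxdev : clear implicits.
Definition dF (A B : seq C) : C :=
  \big[Num.min/maxdev A B 1%g]_(s : 'S_(size A)) maxdev A B s.

Definition Sop (beta : C) (f : {poly C}) : {poly C} := f \Po ('X + beta%:P).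
Definition Hop (t : C) (f : {poly C}) : {poly C} := f \Po ('X * (t^-1)%:P).
Definition Top (n : nat) (alpha : nat -> C) (f : {poly C}) : {poly C} :=
  \sum_(i < n.+1) alpha i *: f^`(i).
End Defs.

From HB Require Import structures.
From mathcomp Require Import all_boot all_order all_fingroup all_algebra.
From mathcomp Require Import ring.
Import Order.TTheory GRing.Theory Num.Theory.
Local Open Scope ring_scope.
Set Implicit Arguments. Unset Strict Implicit. Unset Printing Implicit Defensive.

(* Corollary 4.5.  Let b = alpha_1 / alpha_0, let z_1, ..., z_m be the simple
   roots of f, and put P_t = T H(t) f and Q_t = S(b) H(t) f.  The roots of Q_t
   are exactly the points t z_k - b.  Write a = z_k - b/t: Taylor's formula for
   f(a + b/t) = 0 cancels the terms of order t^0 and t^-1 in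
   P_t(t a) = sum_i alpha_i f^(i)(a) t^-i, so |P_t(t z_k - b)| = O(t^-2).
   Since P_t = (alpha_0 lc(f) / t^m) prod_i (X - w_i) and the points t z_k - b
   are (t d)-separated, a pigeonhole argument (the localization lemma
   [root_matching]) assigns to each of them its own root w_i of P_t at distance
   < eps.  This perfect matching bounds d_F by eps. *)

(* Number domains are only partially ordered, so a min of real values needs
   comparability to be bounded by each of its terms. *)
Lemma bigmin_le_real (R : numDomainType) (I : eqType) (r : seq I) (F : I -> R)
    (x0 : R) (j : I) :
  x0 \is Num.real -> (forall i, F i \is Num.real) -> j \in r ->
  \big[Num.min/x0]_(i <- r) F i <= F j.
Proof.
move=> x0R FR; elim: r => // i r IH; rewrite inE big_cons => jr.
have minR : \big[Num.min/x0]_(k <- r) F k \is Num.real by exact: bigmin_real.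
rewrite comparable_ge_min ?real_comparable //; apply/orP.
by case/orP: jr => [/eqP ->|/IH]; [left; rewrite lexx|right].
Qed.

Section MatchingDistance.
Variable C : numClosedFieldType.

Lemma dF_le_maxdev (A B : seq C) (s : 'S_(size A)) : dF A B <= @maxdev C A B s.
Proof.
have devR (s' : 'S_(size A)) : @maxdev C A B s' \is Num.real.
  by apply: bigmax_real => // k _; exact: normr_real.
by apply: bigmin_le_real => //; exact: mem_index_enum.
Qed.

Lemma dF_lt_matching (A B : seq C) (m : nat) (e : C) (fA fB : 'I_m -> 'I_m) :
  size A = m -> 0 < e -> injective fA -> injective fB ->
  (forall k, `|A`_(fA k) - B`_(fB k)| < e) -> dF A B < e.
Proof.
move=> hA e0 iA iB close; pose p := perm iA.
pose g (i : 'I_(size A)) := cast_ord (esym hA) (fB ((p^-1)%g (cast_ord hA i))).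
have ig : injective g.
  move=> i j /cast_ord_inj /iB /(congr1 p); rewrite !permKV.
  exact: cast_ord_inj.
apply: (le_lt_trans (dF_le_maxdev B (perm ig))).
apply: bigmax_lt => // i _; rewrite permE /=.
have -> : (i : nat) = fA ((p^-1)%g (cast_ord hA i)) by rewrite -(permE iA) -/p permKV.
exact: close.
Qed.

End MatchingDistance.

Section RootLists.
Variable C : numClosedFieldType.

Lemma Zroots_spec (p : {poly C}) : p != 0 ->
  [/\ size (Zroots p) = (size p).-1,
      (forall x, p.[x] = lead_coef p * \prod_(y <- Zroots p) (x - y)) &
      (forall x, root p x = (x \in Zroots p))].
Proof.
move=> nz; have E : p = lead_coef p *: \prod_(z <- Zroots p) ('X - z%:P).
  by rewrite /Zroots; case: (closed_field_poly_normal p).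
have lc0 : lead_coef p != 0 by rewrite lead_coef_eq0.
split.
- by rewrite {2}E size_scale // size_prod_XsubC.
- move=> x; rewrite {1}E hornerZ horner_prod; congr (_ * _).
  by apply: eq_bigr => y _; rewrite hornerXsubC.
- by move=> x; rewrite {1}E rootZ // root_prod_XsubC.
Qed.

Lemma reindex_image (z A : seq C) (g : C -> C) :
  uniq z -> injective g -> size A = size z -> {subset map g z <= A} ->
  exists fA : 'I_(size z) -> 'I_(size z),
    injective fA /\ forall k, A`_(fA k) = g z`_k.
Proof.
move=> uz ig hA sub.
have ex (k : 'I_(size z)) : exists i : 'I_(size z), A`_i == g z`_k.
  have Agk : g z`_k \in A by apply: sub; rewrite map_f ?mem_nth.
  have lt : (index (g z`_k)%R A < size z)%N.
    by move: Agk; rewrite -index_mem hA.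
  by exists (Ordinal lt); rewrite /= nth_index.
have [fA HA] := fin_all_exists ex.
exists fA; split=> [j k E|k]; last exact/eqP.
have /ig/eqP : g z`_j = g z`_k by rewrite -(eqP (HA j)) -(eqP (HA k)) E.
by rewrite nth_uniq // => /eqP/val_inj.
Qed.

End RootLists.

Section Scaling.
Variable C : numClosedFieldType.
Implicit Types (f p : {poly C}) (alpha : nat -> C).

Lemma Sop_Hop_eval f (b t w : C) : (Sop b (Hop t f)).[w] = f.[(w + b) / t].
Proof. by rewrite /Sop /Hop !horner_comp hornerM !hornerD !hornerX !hornerC. Qed.

Lemma Sop_size f (b : C) : size (Sop b f) = size f.
Proof. by rewrite /Sop size_comp_poly2 ?size_XaddC. Qed.

Lemma Hop_size_lead f (t : C) : t != 0 ->
  size (Hop t f) = size f /\ lead_coef (Hop t f) = lead_coef f * t^-1 ^+ (size f).-1.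
Proof.
move=> t0; have sX : size ('X * (t^-1)%:P) = 2 by rewrite size_XmulC ?invr_eq0.
split; first by rewrite /Hop size_comp_poly2.
have lX : lead_coef ('X * (t^-1)%:P) = t^-1.
  by rewrite mulrC mul_polyC lead_coefZ lead_coefX mulr1.
by rewrite /Hop lead_coef_comp ?sX // lX.
Qed.

Lemma derivn_Hop f (c : C) i :
  (f \Po ('X * c%:P))^`(i) = c ^+ i *: (f^`(i) \Po ('X * c%:P)).
Proof.
elim: i => [|i IH]; first by rewrite !derivn0 expr0 scale1r.
rewrite derivnS IH derivZ deriv_comp.
have -> : ('X * c%:P)^`() = c%:P by rewrite mulrC mul_polyC derivZ derivX alg_polyC.
by rewrite mulrC mul_polyC scalerA -exprSr derivnS.
Qed.

Lemma Top_Hop_eval n alpha f (t u : C) : t != 0 ->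
  (Top n alpha (Hop t f)).[t * u] = \sum_(i < n.+1) (alpha i * (f^`(i)).[u]) / t ^+ i.
Proof.
move=> t0; rewrite /Top /Hop horner_sum; apply: eq_bigr => i _.
rewrite hornerZ derivn_Hop hornerZ horner_comp hornerM hornerX hornerC.
by rewrite [t * u]mulrC mulfK // exprVn mulrCA mulrC.
Qed.

Lemma size_derivnS_leq p i : (size p^`(i.+1) <= (size p).-1)%N.
Proof.
have size_deriv (q : {poly C}) : (size q^`() <= (size q).-1)%N.
  have [->|nz] := eqVneq q 0; first by rewrite deriv0 size_poly0.
  by rewrite -ltnS prednK ?size_poly_gt0 // lt_size_deriv.
elim: i => [|i IH]; first exact: size_deriv.
by rewrite derivnS; apply: leq_trans (size_deriv _) (leq_trans (leq_pred _) IH).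
Qed.

Lemma Top_size_lead n alpha p : p != 0 -> alpha 0%N != 0 ->
  size (Top n alpha p) = size p /\ lead_coef (Top n alpha p) = alpha 0%N * lead_coef p.
Proof.
move=> pnz a0; rewrite /Top big_ord_recl /=.
set S := \sum_(i < n) _.
have hs : (size S < size (alpha 0%N *: p))%N.
  have p0 : (0 < size p)%N by rewrite size_poly_gt0.
  rewrite size_scale // -(prednK p0) ltnS.
  rewrite /S; elim/big_ind: _ => [|q r hq hr|i _].
  - by rewrite size_poly0.
  - by apply: leq_trans (size_polyD _ _) _; rewrite geq_max hq hr.
  - by apply: leq_trans (size_scale_leq _ _) _; rewrite -derivnS size_derivnS_leq.
split; first by rewrite size_polyDl // size_scale.
by rewrite lead_coefDl // lead_coefZ.
Qed.

End Scaling.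

Section TaylorDefect.
Variable C : numClosedFieldType.
Implicit Types (f p : {poly C}) (alpha : nat -> C).

Definition majorant p (R : C) : C := \sum_(j < size p) `|p`_j| * R ^+ j.

Lemma majorant_ge0 p (R : C) : 0 <= R -> 0 <= majorant p R.
Proof. by move=> R0; apply: sumr_ge0 => j _; rewrite mulr_ge0 ?exprn_ge0. Qed.

Lemma horner_le_majorant p (x R : C) : `|x| <= R -> `|p.[x]| <= majorant p R.
Proof.
move=> hx; rewrite horner_coef; apply: (le_trans (ler_norm_sum _ _ _)).
apply: ler_sum => i _; rewrite normrM normrX; apply: ler_wpM2l => //.
by apply: lerXn2r => //; rewrite nnegrE // (le_trans _ hx).
Qed.

Lemma tail_sum_bound (N : nat) (c : nat -> C) (t : C) :
  1 <= t -> c 0%N = 0 -> c 1%N = 0 ->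
  `|\sum_(i < N) c i / t ^+ i| <= (\sum_(i < N) `|c i|) / t ^+ 2.
Proof.
move=> t1 c0 c1; have t0 : 0 < t by apply: lt_le_trans t1.
apply: (le_trans (ler_norm_sum _ _ _)); rewrite mulr_suml; apply: ler_sum => i _.
case: i => [[|[|i]] Hi] /=; rewrite ?c0 ?c1 ?(normr0, mul0r) //.
rewrite normrM normfV normrX (ger0_norm (ltW t0)); apply: ler_wpM2l => //.
by rewrite lef_pV2 ?posrE ?exprn_gt0 // ler_weXn2l.
Qed.

(* If f(a + b/t) = 0, subtracting alpha_0 times the Taylor expansion of
   f(a + b/t) around a leaves the defect
   sum_i (alpha_i f^(i)(a) - alpha_0 b^i f^(i)(a)/i!) t^-i. *)
Lemma Top_Hop_taylor_defect n alpha f (b t a : C) :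
  t != 0 -> (size f <= n.+1)%N -> f.[a + b / t] = 0 ->
  (Top n alpha (Hop t f)).[t * a] =
    \sum_(i < n.+1) (alpha i * f^`(i).[a] - alpha 0%N * (b ^+ i * f^`N(i).[a])) / t ^+ i.
Proof.
move=> t0 hs root_ab.
have taylor : \sum_(i < n.+1) alpha 0%N * (b ^+ i * f^`N(i).[a]) / t ^+ i = 0.
  transitivity (alpha 0%N * f.[a + b / t]); last by rewrite root_ab mulr0.
  rewrite (nderiv_taylor_wide (mulrC _ _) hs) mulr_sumr; apply: eq_bigr => i _.
  by rewrite expr_div_n !mulrA [alpha 0%N * _ * b ^+ i]mulrAC.
under eq_bigr do rewrite mulrBl.
by rewrite sumrB taylor subr0 Top_Hop_eval.
Qed.

(* The constant K of the estimate |(T H(t) f)(t z - b)| <= K / t^2, for roots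
   z of f in the disc of radius R - |b|. *)
Definition defect_const n alpha f (R : C) : C :=
  \sum_(i < n.+1) (`|alpha i| * majorant f^`(i) R +
                   `|alpha 0%N| * `|alpha 1%N / alpha 0%N| ^+ i * majorant f^`N(i) R).

Lemma defect_const_ge0 n alpha f (R : C) : 0 <= R -> 0 <= defect_const n alpha f R.
Proof.
move=> R0; apply: sumr_ge0 => i _.
by rewrite addr_ge0 ?mulr_ge0 ?exprn_ge0 ?majorant_ge0.
Qed.

(* For b = alpha_1/alpha_0 the defect terms of order 0 and 1 vanish, so
   T H(t) f is O(t^-2) at the roots t z - b of S(b) H(t) f. *)
Lemma Top_Hop_shifted_root_bound n alpha f (z t R : C) :
  (size f <= n.+1)%N -> alpha 0%N != 0 -> root f z -> 1 <= t ->
  `|z| + `|alpha 1%N / alpha 0%N| <= R ->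
  `|(Top n alpha (Hop t f)).[t * z - alpha 1%N / alpha 0%N]|
    <= defect_const n alpha f R / t ^+ 2.
Proof.
move=> hs a0 rz t1 hR; set b := alpha 1%N / alpha 0%N; set a := z - b / t.
have tp : 0 < t by apply: lt_le_trans t1.
have t0 : t != 0 by rewrite gt_eqF.
have -> : t * z - b = t * a by rewrite /a mulrBr mulrCA divff ?mulr1.
rewrite (@Top_Hop_taylor_defect _ _ _ b) ?subrK ?(rootP rz) //.
pose c i := alpha i * f^`(i).[a] - alpha 0%N * (b ^+ i * f^`N(i).[a]).
apply: (le_trans (tail_sum_bound (c := c) _ t1 _ _)); rewrite /c.
- by rewrite derivn0 nderivn0 expr0 mul1r subrr.
- by rewrite derivn1 nderivn1 expr1 mulrA [alpha 0%N * _]mulrC divfK // subrr.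
have ha : `|a| <= R.
  apply: le_trans (ler_normB _ _) (le_trans _ hR); rewrite lerD2l normrM.
  by rewrite normfV (gtr0_norm tp) ler_pdivrMr // ler_peMr.
apply: ler_wpM2r; first by rewrite invr_ge0 exprn_ge0 // ltW.
apply: ler_sum => i _; apply: (le_trans (ler_normB _ _)); apply: lerD.
  by rewrite normrM ler_wpM2l ?horner_le_majorant.
rewrite [X in X <= _]normrM [X in _ * X <= _]normrM normrX mulrA.
apply: ler_wpM2l; last exact: horner_le_majorant.
by rewrite mulr_ge0 ?exprn_ge0.
Qed.

End TaylorDefect.

Section Localization.
Variable C : numClosedFieldType.

Lemma finite_separation (I : finType) (z : I -> C) : injective z ->
  exists2 d : C, 0 < d & forall j k, j != k -> d <= `|z j - z k|.
Proof.
move=> iz; pose S := \sum_(p : I * I | p.1 != p.2) `|z p.1 - z p.2|^-1.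
have S0 : 0 <= S by apply: sumr_ge0 => p _; rewrite invr_ge0.
exists (1 + S)^-1; first by rewrite invr_gt0 ltr_wpDr.
move=> j k njk.
have dist0 : 0 < `|z j - z k| by rewrite normr_gt0 subr_eq0 (inj_eq iz).
rewrite -[X in _ <= X]invrK lef_pV2 ?posrE ?invr_gt0 ?ltr_wpDr //.
apply: (le_trans _ (ler_wpDl ler01 (lexx S))).
by rewrite /S (bigD1 (j, k)) //= lerDl sumr_ge0 // => p _; rewrite invr_ge0.
Qed.

Lemma far_from_other_point (x y w r d : C) :
  r + r < d -> d <= `|x - y| -> `|y - w| < r -> r <= `|x - w|.
Proof.
move=> rrd dxy yw; have wy : `|w - y| < r by rewrite distrC.
have r0 : 0 < r by apply: le_lt_trans yw.
rewrite real_leNgt ?normr_real ?gtr0_real //; apply/negP => xw.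
have := lt_le_trans (le_lt_trans (ler_distD w x y) (ltrD xw wy)) (ltW rrd).
by rewrite lt_leAnge ?dxy ?andbF.
Qed.

Lemma exists_close_point (m : nat) (a : C) (v : 'I_m -> C) (c eta r : C) :
  0 < r -> `|c| * \prod_(i < m) `|a - v i| <= eta -> eta < `|c| * r ^+ m ->
  exists i, `|a - v i| < r.
Proof.
move=> r0 hprod heta; apply/existsP; move: heta; apply: contraLR => /existsPn far.
have etaR : eta \is Num.real.
  by apply: ger0_real; apply: le_trans hprod; rewrite mulr_ge0 ?prodr_ge0.
rewrite -real_leNgt ?realM ?realX ?normr_real ?(gtr0_real r0) //.
apply: le_trans hprod; apply: ler_wpM2l => //.
rewrite -[X in r ^+ X]card_ord -prodr_const; apply: ler_prod => i _.
by rewrite (ltW r0) real_leNgt ?normr_real ?(gtr0_real r0) ?far.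
Qed.

Lemma close_point_precision (m : nat) (a : C) (v : 'I_m -> C) (j : 'I_m)
    (c eta r e : C) :
  0 <= r -> 0 < e -> (forall i, i != j -> r <= `|a - v i|) ->
  `|c| * \prod_(i < m) `|a - v i| <= eta -> eta < `|c| * r ^+ m.-1 * e ->
  `|a - v j| < e.
Proof.
move=> r0 e0 far hprod heta.
rewrite real_ltNge ?normr_real ?gtr0_real //; apply/negP => he.
suff : `|c| * r ^+ m.-1 * e <= eta by move/(lt_le_trans heta); rewrite ltxx.
apply: le_trans hprod; rewrite (bigD1 j) //= -mulrA ler_wpM2l // mulrC.
apply: ler_pM; rewrite ?exprn_ge0 ?(ltW e0) //.
rewrite -[X in r ^+ X.-1]card_ord -(cardC1 j) -prodr_const.
by apply: ler_prod => i ij; rewrite r0 far.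
Qed.

Lemma root_matching (m : nat) (a v : 'I_m -> C) (c eta r d e : C) :
  0 < r -> r + r < d -> 0 < e ->
  (forall j k, j != k -> d <= `|a j - a k|) ->
  (forall k, `|c| * \prod_(i < m) `|a k - v i| <= eta) ->
  eta < `|c| * r ^+ m -> eta < `|c| * r ^+ m.-1 * e ->
  exists2 fB : 'I_m -> 'I_m, injective fB & forall k, `|a k - v (fB k)| < e.
Proof.
move=> r0 rrd e0 sep hprod hclose hprecise.
have [fB close] := fin_all_exists (fun k => exists_close_point r0 (hprod k) hclose).
have far j k : j != k -> r <= `|a j - v (fB k)|.
  by move=> jk; exact: far_from_other_point rrd (sep j k jk) (close k).
have iB : injective fB.
  move=> j k E; apply/eqP; apply: contraT => /far; rewrite -E => h.
  by have := lt_le_trans (close j) h; rewrite ltxx.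
have [g fBK gK] := injF_bij iB.
exists fB => // k; apply: (close_point_precision (ltW r0) e0 _ (hprod k) hprecise).
move=> i ik; rewrite -[i]gK; apply: far.
by apply: contra ik => /eqP ->; rewrite gK.
Qed.

End Localization.

Section ScaledRoots.
Variables (C : numClosedFieldType) (n : nat) (alpha : nat -> C) (f : {poly C}).
Hypotheses (a0 : alpha 0%N != 0) (size_f : (size f <= n.+1)%N) (size_f2 : (1 < size f)%N).

Local Notation b := (alpha 1%N / alpha 0%N).
Local Notation c := (alpha 0%N * lead_coef f).
Local Notation z := (Zroots f).
Local Notation m := (size (Zroots f)).
Local Notation P t := (Top n alpha (Hop t f)).
Local Notation Q t := (Sop b (Hop t f)).
Local Notation K := (defect_const n alpha f (\sum_(k < size (Zroots f)) `|z`_k| + `|b|)).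

Lemma f_neq0 : f != 0.
Proof. by rewrite -size_poly_gt0 ltnW. Qed.

Lemma size_Zroots_f : m = (size f).-1.
Proof. by case: (Zroots_spec f_neq0). Qed.

Lemma root_f_Zroots x : root f x = (x \in z).
Proof. by case: (Zroots_spec f_neq0). Qed.

Lemma Zroots_separated : uniq z ->
  exists2 d : C, 0 < d & forall j k : 'I_m, j != k -> d <= `|z`_j - z`_k|.
Proof.
move=> uz; apply: (@finite_separation _ _ (fun k : 'I_m => z`_k)) => j k /eqP.
by rewrite nth_uniq // => /eqP /val_inj.
Qed.

Lemma Sop_Hop_roots t : t != 0 -> uniq z ->
  size (Zroots (Q t)) = m /\ exists fA : 'I_m -> 'I_m,
    injective fA /\ forall k, (Zroots (Q t))`_(fA k) = t * z`_k - b.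
Proof.
move=> t0 uz; have [sH _] := Hop_size_lead f t0.
have Qnz : Q t != 0 by rewrite -size_poly_gt0 Sop_size sH ltnW.
have [sA _ rootA] := Zroots_spec Qnz.
have sAm : size (Zroots (Q t)) = m by rewrite sA Sop_size sH size_Zroots_f.
split=> //; apply: (@reindex_image _ _ _ (fun x => t * x - b)) => //.
  by move=> x y /addIr /(mulfI t0).
move=> _ /mapP [x zx ->]; rewrite -rootA rootE Sop_Hop_eval subrK mulrC mulKf //.
by rewrite -[_ == 0]/(root f x) root_f_Zroots.
Qed.

Lemma Top_Hop_factor t : t != 0 ->
  size (Zroots (P t)) = m /\
  forall w, (P t).[w] = c / t ^+ m * \prod_(i < m) (w - (Zroots (P t))`_i).
Proof.
move=> t0; have [sH lH] := Hop_size_lead f t0.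
have Hnz : Hop t f != 0 by rewrite -size_poly_gt0 sH ltnW.
have [sP lP] := Top_size_lead n Hnz a0.
have Pnz : P t != 0 by rewrite -size_poly_gt0 sP sH ltnW.
have [sB evB _] := Zroots_spec Pnz.
have sBm : size (Zroots (P t)) = m by rewrite sB sP sH size_Zroots_f.
split=> // w; rewrite evB lP lH -size_Zroots_f exprVn mulrA (big_nth 0) sBm.
by rewrite big_mkord.
Qed.

Lemma Top_Hop_small_at_shifted_roots t : 1 <= t -> forall k : 'I_m,
  `|c / t ^+ m| * \prod_(i < m) `|(t * z`_k - b) - (Zroots (P t))`_i| <= K / t ^+ 2.
Proof.
move=> t1 k; have t0 : t != 0 by rewrite gt_eqF // (lt_le_trans ltr01).
rewrite -normr_prod -normrM -(Top_Hop_factor t0).2.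
apply: Top_Hop_shifted_root_bound => //; first by rewrite root_f_Zroots mem_nth.
by rewrite lerD2r (bigD1 k) //= lerDl sumr_ge0.
Qed.

(* Once K/t falls below the two localization thresholds (in the rescaled
   variable, with r = d/3), d_F(Z(Q t), Z(P t)) < eps. *)
Lemma dF_lt_for_large_t (d eps t : C) :
  uniq z -> 0 < d -> (forall j k : 'I_m, j != k -> d <= `|z`_j - z`_k|) ->
  0 < eps -> 1 <= t ->
  K / t < `|c| * (d / 3%:R) ^+ m -> K / t < `|c| * (d / 3%:R) ^+ m.-1 * eps ->
  dF (Zroots (Q t)) (Zroots (P t)) < eps.
Proof.
move=> uz d0 sep eps0 t1 hclose hprecise; set r := d / 3%:R in hclose hprecise *.
have tp : 0 < t by apply: lt_le_trans t1.
have t0 : t != 0 by rewrite gt_eqF.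
have r0 : 0 < r by rewrite divr_gt0 ?ltr0n.
have d3 : d = r *+ 3 by rewrite /r -mulr_natr divfK ?pnatr_eq0.
have K0 : 0 <= K by rewrite defect_const_ge0 // addr_ge0 ?sumr_ge0.
have m0 : (0 < m)%N by rewrite size_Zroots_f -ltnS prednK ?(ltnW size_f2).
have normc : `|c / t ^+ m| = `|c| / t ^+ m.
  by rewrite normrM normfV normrX (gtr0_norm tp).
have Kt2 : K / t ^+ 2 = K / t / t by rewrite expr2 invfM mulrA.
have [sA [fA [iA HA]]] := Sop_Hop_roots t0 uz.
have [sB _] := Top_Hop_factor t0.
have [fB iB HB] : exists2 fB : 'I_m -> 'I_m, injective fB &
    forall k : 'I_m, `|(t * z`_k - b) - (Zroots (P t))`_(fB k)| < eps.
  apply: (root_matching (a := fun k => t * z`_k - b)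
    (v := fun i => (Zroots (P t))`_i) (c := c / t ^+ m) (r := t * r) (d := t * d)
    (eta := K / t ^+ 2)
    (mulr_gt0 tp r0) _ eps0 _ (Top_Hop_small_at_shifted_roots t1)).
  - by rewrite -mulrDr ltr_pM2l // d3 !mulrS mulr0n addr0 addrA ltrDl.
  - move=> j k jk; rewrite opprB addrA subrK -mulrBr normrM gtr0_norm //.
    by rewrite ler_pM2l // sep.
  - rewrite normc exprMn mulrA divfK ?expf_neq0 //; apply: le_lt_trans hclose.
    by rewrite Kt2 ler_pdivrMr // ler_peMr // divr_ge0 // ltW.
  - have scale k : (0 < k)%N ->
        `|c| / t ^+ k * (t * r) ^+ k.-1 * eps = `|c| * r ^+ k.-1 * eps / t.
      case: k => // k _; rewrite exprMn exprSr.
      by move: (t ^+ k) (expf_neq0 k t0) => u u0; field; rewrite u0 t0.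
    by rewrite normc scale // Kt2 ltr_pM2r ?invr_gt0.
apply: (dF_lt_matching sA eps0 iA iB) => k.
by rewrite HA; exact: HB.
Qed.

End ScaledRoots.

Lemma beyond_threshold (R : numFieldType) (K X1 X2 t : R) :
  0 <= K -> 0 < X1 -> 0 < X2 -> 1 + K / X1 + K / X2 < t ->
  [/\ 1 <= t, K / t < X1 & K / t < X2].
Proof.
move=> K0 X1p X2p Mt.
have [KX1 KX2] : 0 <= K / X1 /\ 0 <= K / X2 by rewrite !divr_ge0 // ltW.
have t1 : 1 <= t by apply: le_trans (ltW Mt); rewrite -addrA lerDl addr_ge0.
have tp : 0 < t by apply: lt_le_trans t1.
split=> //; rewrite ltr_pdivrMr // [_ * t]mulrC -ltr_pdivrMr //.
  by apply: le_lt_trans Mt; rewrite ler_wpDr // ler_wpDl.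
by apply: le_lt_trans Mt; rewrite ler_wpDl // addr_ge0.
Qed.

Theorem corollary4p5 (C : numClosedFieldType) (n : nat) (alpha : nat -> C)
    (f : {poly C}) :
  (2 <= n)%N -> alpha 0%N != 0 ->
  (size f <= n.+1)%N -> (2 < size f)%N -> uniq (Zroots f) ->
  forall eps : C, 0 < eps ->
    exists M : C, 0 < M /\
      forall t : C, M < t ->
        dF (Zroots (Sop (alpha 1%N / alpha 0%N) (Hop t f)))
           (Zroots (Top n alpha (Hop t f))) < eps.
Proof.
move=> _ a0 size_f size_f2 uz eps eps0; have size_f1 := ltnW size_f2.
have [d d0 sep] := Zroots_separated uz.
set m := size (Zroots f); set c := `|alpha 0%N * lead_coef f|.
set K := defect_const n alpha f
  (\sum_(k < m) `|(Zroots f)`_k| + `|alpha 1%N / alpha 0%N|).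
have K0 : 0 <= K by rewrite defect_const_ge0 // addr_ge0 ?sumr_ge0.
have c0 : 0 < c by rewrite normr_gt0 mulf_neq0 // lead_coef_eq0 f_neq0.
have d3 : 0 < d / 3%:R by rewrite divr_gt0 ?ltr0n.
have X1p : 0 < c * (d / 3%:R) ^+ m by rewrite mulr_gt0 ?exprn_gt0.
have X2p : 0 < c * (d / 3%:R) ^+ m.-1 * eps by rewrite !mulr_gt0 ?exprn_gt0.
exists (1 + K / (c * (d / 3%:R) ^+ m) + K / (c * (d / 3%:R) ^+ m.-1 * eps)).
split=> [|t /(beyond_threshold K0 X1p X2p) [t1 close precise]].
  by rewrite -addrA ltr_wpDr // addr_ge0 // divr_ge0 // ltW.
exact: (dF_lt_for_large_t a0 size_f size_f1 uz d0 sep eps0 t1).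
Qed.
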